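(* Fix $n\ge 1$. Let $\mathsf{X}$ and $\mathsf{Y}$ be intermediate temporal logics with $\mathrm{ITL}^{\mathrm{BD}_n}\subseteq \mathsf{X}\subseteq \mathrm{THT}$ and $\mathrm{ITL}^{\mathrm{BD}_n}\subseteq \mathsf{Y}\subseteq \mathrm{THT}$. Then for every temporal theory $\Gamma$, the $\mathsf{X}$-temporal safe belief sets of $\Gamma$ coincide with the $\mathsf{Y}$-temporal safe belief sets of $\Gamma$; i.e. for every $T\subseteq \mathbb{P}^{\circ}$, $T$ is an $\mathsf{X}$-temporal safe belief set of $\Gamma$ iff $T$ is a $\mathsf{Y}$-temporal safe belief set of $\Gamma$.
   Context: Fix a countable set $\mathbb{P}$ of atoms. Temporal formulas: $\varphi ::= p\in\mathbb{P}\mid \bot\mid \varphi\wedge\varphi\mid\varphi\vee\varphi\mid\varphi\to\varphi\mid \circ\varphi\mid \varphi\,\mathsf{U}\,\varphi\mid\varphi\,\mathsf{R}\,\varphi$; $\neg\varphi:=\varphi\to\bot$, $\Box\varphi:=\bot\,\mathsf{R}\,\varphi$, $\circ^0\varphi:=\varphi$, $\circ^{i+1}\varphi:=\circ\circ^i\varphi$. A temporal theory is a set of temporal formulas. An intuitionistic temporal frame is $(W,\preccurlyeq,S)$ with $W\neq\emptyset$, $\preccurlyeq$ a partial order on $W$, and $S:W\to W$ a function with forward confluence ($w\preccurlyeq v\Rightarrow S(w)\preccurlyeq S(v)$); it is persistent if also backward confluent (if $S(w)=v$ and $v\preccurlyeq u$ then there is $t$ with $w\preccurlyeq t$ and $S(t)=u$).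 A model adds a valuation $V:W\to 2^{\mathbb{P}}$ with $w\preccurlyeq v\Rightarrow V(w)\subseteq V(v)$. Satisfaction: $M,w\models p$ iff $p\in V(w)$; $\bot$ never holds; $\wedge,\vee$ pointwise; $M,w\models\varphi\to\psi$ iff for all $v$ with $w\preccurlyeq v$, $M,v\models\varphi$ implies $M,v\models\psi$; $M,w\models\circ\varphi$ iff $M,S(w)\models\varphi$; $M,w\models\varphi\,\mathsf{U}\,\psi$ iff there is $k\ge0$ with $M,S^k(w)\models\psi$ and $M,S^i(w)\models\varphi$ for all $0\le i<k$; $M,w\models\varphi\,\mathsf{R}\,\psi$ iff for all $k\ge 0$, $M,S^k(w)\models\psi$ or $M,S^i(w)\models\varphi$ for some $0\le i<k$. A frame has depth $\le n$ if $(W,\preccurlyeq)$ has no chain of $n+1$ pairwise distinct worlds. $\mathrm{ITL}^{\mathrm{BD}_n}$ is the set of formulas true at every world of every model on a persistent frame of depth $\le n$; $\mathrm{LTL}$ is the case $n=1$. An intermediate temporal logic is a set $\mathsf{X}$ of formulas with $\mathrm{ITL}^{\mathrm{BD}_n}\subseteq\mathsf{X}\subseteq\mathrm{LTL}$ for some $n\ge1$, closed under modus ponens, necessitation ($\psi\in\mathsf{X}\Rightarrow \circ\psi,\Box\psi\in\mathsf{X}$) and uniform substitution of formulas for atoms. $\mathsf{X}$-models are models on persistent frames of depth $\le n$ validating every formula of $\mathsf{X}$, except that $\mathrm{THT}$-models are exactly the models on the THT frame: $W=\mathbb{N}\times\{0,1\}$, $(i,h)\preccurlyeq(j,t)$ iff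 $i=j$ and $h\le t$, $S((i,k))=(i+1,k)$; $\mathrm{THT}$ is the set of formulas true at every world of every such model. $\Gamma$ is $\mathsf{X}$-consistent if some $\mathsf{X}$-model $M$ and world $w$ satisfy $M,w\models\gamma$ for all $\gamma\in\Gamma$. $\Gamma\models_{\mathsf{X}}\Delta$ means: for every $\mathsf{X}$-model $M$ and world $w$, if $M,w$ satisfies all of $\Gamma$ then it satisfies every formula of $\Delta$. Let $\mathbb{P}^{\circ}:=\{\circ^ip\mid p\in\mathbb{P},i\ge0\}$. For a logic $\mathsf{X}$, $T\subseteq\mathbb{P}^{\circ}$ is an $\mathsf{X}$-temporal safe belief set of $\Gamma$ if, with $\Sigma_T:=\Gamma\cup\{\circ^i\neg\neg p\mid\circ^ip\in T\}\cup\{\circ^i\neg p\mid \circ^ip\notin T\}$, (1) $\Sigma_T$ is $\mathsf{X}$-consistent and (2) $\Sigma_T\models_{\mathsf{X}}T$. *)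

From Stdlib Require Import Arith.

Inductive form : Type :=
| Atom (p : nat)
| Bot
| And (a b : form)
| Or (a b : form)
| Imp (a b : form)
| Next (a : form)
| Until (a b : form)
| Release (a b : form).

Definition neg (a : form) : form := Imp a Bot.
Definition box (a : form) : form := Release Bot a.
Fixpoint nexti (i : nat) (a : form) : form :=
  match i with 0 => a | S i' => Next (nexti i' a) end.

Fixpoint subst (s : nat -> form) (a : form) : form :=
  match a with
  | Atom p => s p
  | Bot => Bot
  | And a b => And (subst s a) (subst s b)
  | Or a b => Or (subst s a) (subst s b)
  | Imp a b => Imp (subst s a) (subst s b)
  | Next a => Next (subst s a)
  | Until a b => Until (subst s a) (subst s b)
  | Release a b => Release (subst s a) (subst s b)
  end.

Record model : Type := Model {
  W : Type;
  le : W -> W -> Prop;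
  succ : W -> W;
  val : W -> nat -> Prop
}.

Fixpoint iter {A : Type} (k : nat) (f : A -> A) (x : A) : A :=
  match k with 0 => x | S k' => f (iter k' f x) end.

Fixpoint sat (M : model) (w : W M) (a : form) {struct a} : Prop :=
  match a with
  | Atom p => val M w p
  | Bot => False
  | And a b => sat M w a /\ sat M w b
  | Or a b => sat M w a \/ sat M w b
  | Imp a b => forall v, le M w v -> sat M v a -> sat M v b
  | Next a => sat M (succ M w) a
  | Until a b => exists k, sat M (iter k (succ M) w) b /\
                   forall i, i < k -> sat M (iter i (succ M) w) a
  | Release a b => forall k, sat M (iter k (succ M) w) b \/
                   exists i, i < k /\ sat M (iter i (succ M) w) a
  end.

Definition persistent_model (M : model) : Prop :=
  (forall w, le M w w) /\
  (forall u v w, le M u v -> le M v w -> le M u w) /\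
  (forall u v, le M u v -> le M v u -> u = v) /\
  (forall w v, le M w v -> le M (succ M w) (succ M v)) /\
  (forall w u, le M (succ M w) u -> exists t, le M w t /\ succ M t = u) /\
  (forall w v p, le M w v -> val M w p -> val M v p).

(* depth <= n: no chain of n+1 pairwise distinct worlds
   (a chain enumerated in increasing order f 0 < f 1 < ... < f n). *)
Definition depth_le (M : model) (n : nat) : Prop :=
  ~ exists f : nat -> W M,
      forall i j, i < j -> j <= n -> le M (f i) (f j) /\ f i <> f j.

Definition ITL_BD (n : nat) (a : form) : Prop :=
  forall M : model, persistent_model M -> depth_le M n -> forall w, sat M w a.

Definition LTL (a : form) : Prop := ITL_BD 1 a.

Definition tht_le (x y : nat * bool) : Prop :=
  fst x = fst y /\ Nat.leb (Nat.b2n (snd x)) (Nat.b2n (snd y)) = true.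
Definition tht_succ (x : nat * bool) : nat * bool := (S (fst x), snd x).

Definition tht_val (V : nat * bool -> nat -> Prop) : Prop :=
  forall w v p, tht_le w v -> V w p -> V v p.

Definition THTM (V : nat * bool -> nat -> Prop) : model :=
  Model (nat * bool) tht_le tht_succ V.

Definition is_THT_model (M : model) : Prop :=
  exists V, tht_val V /\ M = THTM V.

Definition THT (a : form) : Prop :=
  forall V, tht_val V -> forall w, sat (THTM V) w a.

Definition incl (X Y : form -> Prop) : Prop := forall a, X a -> Y a.

Definition intermediate_logic (X : form -> Prop) : Prop :=
  (exists m, 1 <= m /\ incl (ITL_BD m) X) /\
  incl X LTL /\
  (forall a b, X a -> X (Imp a b) -> X b) /\
  (forall a, X a -> X (Next a) /\ X (box a)) /\
  (forall s a, X a -> X (subst s a)).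

Definition is_THT_logic (X : form -> Prop) : Prop := forall a, X a <-> THT a.

Definition Xmodel (n : nat) (X : form -> Prop) (M : model) : Prop :=
  (is_THT_logic X -> is_THT_model M) /\
  (~ is_THT_logic X ->
     persistent_model M /\ depth_le M n /\ forall a, X a -> forall w, sat M w a).

Definition consistent (n : nat) (X : form -> Prop) (G : form -> Prop) : Prop :=
  exists M, Xmodel n X M /\ exists w : W M, forall g, G g -> sat M w g.

Definition entails (n : nat) (X : form -> Prop) (G D : form -> Prop) : Prop :=
  forall M, Xmodel n X M -> forall w : W M,
    (forall g, G g -> sat M w g) -> forall d, D d -> sat M w d.

Definition Pcirc (a : form) : Prop := exists i p, a = nexti i (Atom p).

Definition SigmaT (G T : form -> Prop) (a : form) : Prop :=
  G a \/
  (exists i p, T (nexti i (Atom p)) /\ a = nexti i (neg (neg (Atom p)))) \/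
  (exists i p, ~ T (nexti i (Atom p)) /\ a = nexti i (neg (Atom p))).

Definition temporal_safe_belief_set (n : nat) (X : form -> Prop)
  (G T : form -> Prop) : Prop :=
  incl T Pcirc /\ consistent n X (SigmaT G T) /\ entails n X (SigmaT G T) T.

From Stdlib Require Import Arith Classical Lia.

(* Both logics sit between ITL^BD_n and THT, so n >= 2 (excluded middle holds
   on frames of depth 1 but not in THT); hence every THT model is an X-model
   and every X-model is a persistent model of depth <= n. It therefore
   suffices to compare X-safe belief sets with THT-safe belief sets.

   Let w satisfy Sigma_T in a persistent model of bounded depth. Above w the
   atoms true at the j-th successor of any world are contained in T (by the
   axioms ~o^j p), and at a maximal world they are exactly those of T (by the
   axioms ~~o^j p). If x >= w is a world all of whose proper extensions
   fulfil T, and some extension does, then x is bisimilar to the "here"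
   world (0,false) of the THT model whose "here" row is the trace of x and
   whose "there" row is T itself. Hence a consistent Sigma_T has a THT model
   (copy a maximal world), and if Sigma_T THT-entails T then, by induction on
   the height of worlds above w, every such world fulfils T. *)

Lemma iter_succ_comm {A} (f : A -> A) i x : iter i f (f x) = f (iter i f x).
Proof. induction i; simpl; congruence. Qed.

Lemma iter_add {A} (f : A -> A) i j x : iter i f (iter j f x) = iter (i + j) f x.
Proof. induction i; simpl; congruence. Qed.

Lemma sat_nexti M i a w : sat M w (nexti i a) <-> sat M (iter i (succ M) w) a.
Proof.
  revert w; induction i as [|i IH]; intro w; simpl; [tauto|].
  now rewrite IH, iter_succ_comm.
Qed.

Section Bisimulation.

Variables M1 M2 : model.
Variable Z : W M1 -> W M2 -> Prop.
Hypothesis Z_val : forall a b p, Z a b -> (val M1 a p <-> val M2 b p).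
Hypothesis Z_succ : forall a b, Z a b -> Z (succ M1 a) (succ M2 b).
Hypothesis Z_forth : forall a b a', Z a b -> le M1 a a' -> exists b', le M2 b b' /\ Z a' b'.
Hypothesis Z_back : forall a b b', Z a b -> le M2 b b' -> exists a', le M1 a a' /\ Z a' b'.

Lemma Z_iter k a b : Z a b -> Z (iter k (succ M1) a) (iter k (succ M2) b).
Proof. induction k; simpl; auto. Qed.

Lemma sat_bisim phi : forall a b, Z a b -> (sat M1 a phi <-> sat M2 b phi).
Proof.
  induction phi as [p| |phi1 IH1 phi2 IH2|phi1 IH1 phi2 IH2|phi1 IH1 phi2 IH2
                   |phi IH|phi1 IH1 phi2 IH2|phi1 IH1 phi2 IH2];
    intros a b HZ; simpl.
  - now apply Z_val.
  - tauto.
  - now rewrite (IH1 a b HZ), (IH2 a b HZ).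
  - now rewrite (IH1 a b HZ), (IH2 a b HZ).
  - split.
    + intros H b' Hbb' H1. destruct (Z_back _ _ _ HZ Hbb') as [a' [Haa' HZ']].
      apply (IH2 _ _ HZ'), H, (IH1 _ _ HZ'); assumption.
    + intros H a' Haa' H1. destruct (Z_forth _ _ _ HZ Haa') as [b' [Hbb' HZ']].
      apply (IH2 _ _ HZ'), H, (IH1 _ _ HZ'); assumption.
  - now apply IH, Z_succ.
  - pose proof (fun k => IH1 _ _ (Z_iter k a b HZ)) as E1.
    pose proof (fun k => IH2 _ _ (Z_iter k a b HZ)) as E2.
    split; intros [k [Hk Hlt]]; exists k;
      split; [apply E2, Hk | | apply E2, Hk |]; intros i Hi; apply E1, Hlt, Hi.
  - pose proof (fun k => IH1 _ _ (Z_iter k a b HZ)) as E1.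
    pose proof (fun k => IH2 _ _ (Z_iter k a b HZ)) as E2.
    split; intros H k; destruct (H k) as [Hk | [i [Hi Hik]]];
      solve [left; apply E2, Hk | right; exists i; split; [exact Hi | apply E1, Hik]].
Qed.

End Bisimulation.

Definition maximal M (x : W M) : Prop := forall t, le M x t -> t = x.

Definition chain M (f : nat -> W M) (k : nat) : Prop :=
  forall i j, i < j -> j <= k -> le M (f i) (f j) /\ f i <> f j.

Lemma not_maximal M x : ~ maximal M x -> exists t, le M x t /\ t <> x.
Proof.
  intro Hx. apply not_all_ex_not in Hx as [t Ht].
  apply imply_to_and in Ht. now exists t.
Qed.

Section PersistentModel.

Variable M : model.
Hypothesis HM : persistent_model M.

Lemma pm_refl x : le M x x.
Proof. apply HM. Qed.

Lemma pm_trans x y z : le M x y -> le M y z -> le M x z.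
Proof. apply HM. Qed.

Lemma pm_antisym x y : le M x y -> le M y x -> x = y.
Proof. apply HM. Qed.

Lemma pm_val_mono x y p : le M x y -> val M x p -> val M y p.
Proof. apply HM. Qed.

Lemma le_iter j x y : le M x y -> le M (iter j (succ M) x) (iter j (succ M) y).
Proof. intro Hxy. induction j; simpl; [exact Hxy | now apply HM]. Qed.

Lemma le_iter_back j x u :
  le M (iter j (succ M) x) u -> exists t, le M x t /\ iter j (succ M) t = u.
Proof.
  revert u; induction j as [|j IH]; intros u Hu; simpl in *; [now exists u|].
  destruct HM as (_ & _ & _ & _ & Hback & _).
  destruct (Hback _ _ Hu) as [t1 [Ht1 <-]]. destruct (IH _ Ht1) as [t [Ht <-]].
  now exists t.
Qed.

Lemma sat_mono a : forall w v, le M w v -> sat M w a -> sat M v a.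
Proof.
  induction a as [p| |a1 IH1 a2 IH2|a1 IH1 a2 IH2|a1 IH1 a2 IH2
                 |a IH|a1 IH1 a2 IH2|a1 IH1 a2 IH2];
    intros w v Hwv H; simpl in *.
  - exact (pm_val_mono _ _ _ Hwv H).
  - exact H.
  - destruct H; split; eauto.
  - destruct H; [left | right]; eauto.
  - intros u Hvu. apply H, (pm_trans _ _ _ Hwv Hvu).
  - exact (IH _ _ (le_iter 1 _ _ Hwv) H).
  - destruct H as [k [Hk Hlt]]. exists k. split.
    + exact (IH2 _ _ (le_iter k _ _ Hwv) Hk).
    + intros i Hi. exact (IH1 _ _ (le_iter i _ _ Hwv) (Hlt i Hi)).
  - intro k. destruct (H k) as [Hk | [i [Hi Hik]]].
    + left. exact (IH2 _ _ (le_iter k _ _ Hwv) Hk).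
    + right. exists i. split; [exact Hi | exact (IH1 _ _ (le_iter i _ _ Hwv) Hik)].
Qed.

Lemma maximal_iter x j : maximal M x -> maximal M (iter j (succ M) x).
Proof.
  intros Hx u Hu. destruct (le_iter_back j x u Hu) as [t [Ht <-]].
  now rewrite (Hx t Ht).
Qed.

Lemma chain_cons x f k :
  le M x (f 0) -> f 0 <> x -> chain M f k ->
  chain M (fun i => match i with 0 => x | S i' => f i' end) (S k).
Proof.
  intros Hx Hne Hf [|i] [|j] Hij Hj; try lia.
  - assert (Hf0j : le M (f 0) (f j)).
    { destruct j; [apply pm_refl | apply (Hf 0 (S j)); lia]. }
    split; [exact (pm_trans _ _ _ Hx Hf0j) |].
    intros ->. apply Hne, pm_antisym; [exact Hf0j | exact Hx].
  - apply Hf; lia.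
Qed.

Lemma chain_free_ind (P : W M -> Prop) :
  (forall x, (forall t, le M x t -> t <> x -> P t) -> P x) ->
  forall k x, ~ (exists f, f 0 = x /\ chain M f k) -> P x.
Proof.
  intros Hstep k. induction k as [|k IH]; intros x Hx.
  - exfalso. apply Hx. exists (fun _ => x). split; [reflexivity | intros i j; lia].
  - apply Hstep. intros t Hxt Hne. apply IH. intros [f [<- Hf]].
    apply Hx. eexists; split; [| exact (chain_cons x f k Hxt Hne Hf)]. reflexivity.
Qed.

Lemma depth_le_ind n (P : W M -> Prop) :
  depth_le M n ->
  (forall x, (forall t, le M x t -> t <> x -> P t) -> P x) -> forall x, P x.
Proof.
  intros Hn Hstep x. apply (chain_free_ind P Hstep n).
  intros [f [_ Hf]]. apply Hn. now exists f.
Qed.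

Lemma exists_maximal n x : depth_le M n -> exists m, le M x m /\ maximal M m.
Proof.
  intro Hn. revert x. apply (depth_le_ind n _ Hn). intros x IH.
  destruct (classic (maximal M x)) as [Hx | Hx]; [exists x; split; [apply pm_refl | exact Hx]|].
  destruct (not_maximal M x Hx) as [t [Hxt Hne]].
  destruct (IH t Hxt Hne) as [m [Htm Hm]].
  exists m. split; [exact (pm_trans _ _ _ Hxt Htm) | exact Hm].
Qed.

End PersistentModel.

Definition sat_SigmaT M (G T : form -> Prop) (w : W M) : Prop :=
  forall g, SigmaT G T g -> sat M w g.

Definition fulfils M (T : form -> Prop) (j : nat) (y : W M) : Prop :=
  forall i p, T (nexti (j + i) (Atom p)) -> val M (iter i (succ M) y) p.

Lemma fulfils_iter M T j t : fulfils M T 0 t -> fulfils M T j (iter j (succ M) t).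
Proof.
  intros Ht i p HT. rewrite iter_add. apply Ht. now rewrite Nat.add_comm in HT.
Qed.

Lemma fulfils_iff_sat M T x :
  incl T Pcirc -> (fulfils M T 0 x <-> forall d, T d -> sat M x d).
Proof.
  intro HT. split.
  - intros Hx d Hd. destruct (HT d Hd) as [i [p ->]]. apply sat_nexti. now apply Hx.
  - intros Hx i p Hip. exact (proj1 (sat_nexti M i _ x) (Hx _ Hip)).
Qed.

Section SigmaTModel.

Variable M : model.
Hypothesis HM : persistent_model M.
Variables G T : form -> Prop.
Variable w : W M.
Hypothesis Hw : sat_SigmaT M G T w.

Lemma sat_SigmaT_mono x : le M w x -> sat_SigmaT M G T x.
Proof. intros Hwx g Hg. exact (sat_mono M HM g w x Hwx (Hw g Hg)). Qed.

Lemma T_of_val_above x j y p :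
  le M w x -> le M (iter j (succ M) x) y -> val M y p -> T (nexti j (Atom p)).
Proof.
  intros Hwx Hy Hp. apply NNPP. intro HnT.
  assert (Hneg : sat M w (nexti j (neg (Atom p)))).
  { apply Hw. right; right. now exists j, p. }
  apply sat_nexti in Hneg. apply (Hneg y); [| exact Hp].
  exact (pm_trans M HM _ _ _ (le_iter M HM j w x Hwx) Hy).
Qed.

Lemma maximal_fulfils x : le M w x -> maximal M x -> fulfils M T 0 x.
Proof.
  intros Hwx Hx i p HT. apply NNPP. intro Hp.
  assert (Hnn : sat M w (nexti i (neg (neg (Atom p))))).
  { apply Hw. right; left. now exists i, p. }
  apply sat_nexti in Hnn. apply (Hnn _ (le_iter M HM i w x Hwx)).
  intros u Hu Hup. apply Hp. now rewrite <- (maximal_iter M HM x i Hx u Hu).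
Qed.

Section THTCopy.

Variable x : W M.
Hypothesis Hwx : le M w x.

(* The "here" row of the copy is the trace of x; a "there" world (j,true)
   stands for any world above the j-th successor of x that fulfils T from j. *)
Definition copy_val (jb : nat * bool) (p : nat) : Prop :=
  if snd jb then T (nexti (fst jb) (Atom p)) else val M (iter (fst jb) (succ M) x) p.

Definition copy_rel (jb : nat * bool) (y : W M) : Prop :=
  if snd jb then le M (iter (fst jb) (succ M) x) y /\ fulfils M T (fst jb) y
  else y = iter (fst jb) (succ M) x.

Lemma copy_val_tht : tht_val copy_val.
Proof.
  intros [j b] [j' b'] p [Hj Hb] Hp; simpl in *; subst j'.
  unfold copy_val in *; destruct b, b'; simpl in *; try discriminate; try exact Hp.
  exact (T_of_val_above x j _ p Hwx (pm_refl M HM _) Hp).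
Qed.

Lemma copy_rel_val jb y p : copy_rel jb y -> (copy_val jb p <-> val M y p).
Proof.
  destruct jb as [j [|]]; unfold copy_rel, copy_val; simpl.
  - intros [Hy Hful]. split; intro Hp.
    + specialize (Hful 0 p). rewrite Nat.add_0_r in Hful. exact (Hful Hp).
    + exact (T_of_val_above x j y p Hwx Hy Hp).
  - now intros ->.
Qed.

Lemma copy_rel_succ jb y : copy_rel jb y -> copy_rel (tht_succ jb) (succ M y).
Proof.
  destruct jb as [j [|]]; unfold copy_rel, tht_succ; simpl.
  - intros [Hy Hful]. split; [now apply HM |].
    intros i p HT. rewrite iter_succ_comm. apply (Hful (S i)).
    now rewrite Nat.add_succ_r.
  - now intros ->.
Qed.

Hypothesis Hsome : exists t, le M x t /\ fulfils M T 0 t.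

Lemma copy_rel_forth jb y jb' :
  copy_rel jb y -> tht_le jb jb' -> exists y', le M y y' /\ copy_rel jb' y'.
Proof.
  destruct jb as [j b], jb' as [j' b']. intros Hy [Hj Hb]; simpl in Hj, Hb; subst j'.
  destruct b, b'; simpl in Hb; try discriminate;
    try (exists y; split; [apply (pm_refl M HM) | exact Hy]).
  destruct Hsome as [t [Hxt Ht]]. unfold copy_rel in *; simpl in *; subst y.
  exists (iter j (succ M) t).
  split; [exact (le_iter M HM j x t Hxt) |].
  split; [exact (le_iter M HM j x t Hxt) | exact (fulfils_iter M T j t Ht)].
Qed.

Hypothesis Hproper : forall t, le M x t -> t <> x -> fulfils M T 0 t.

Lemma copy_rel_back jb y y' :
  copy_rel jb y -> le M y y' -> exists jb', tht_le jb jb' /\ copy_rel jb' y'.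
Proof.
  destruct jb as [j [|]]; unfold copy_rel; simpl; intros Hy Hyy'.
  - destruct Hy as [Hy Hful]. exists (j, true). split; [split; reflexivity |]. split.
    + exact (pm_trans M HM _ _ _ Hy Hyy').
    + intros i p HT. apply (pm_val_mono M HM (iter i (succ M) y)).
      * now apply le_iter.
      * now apply Hful.
  - subst y. destruct (classic (y' = iter j (succ M) x)) as [E | E].
    + exists (j, false). split; [split; reflexivity | exact E].
    + destruct (le_iter_back M HM j x y' Hyy') as [t [Hxt <-]].
      exists (j, true). split; [split; reflexivity |]. split; [exact Hyy' |].
      apply fulfils_iter, Hproper; [exact Hxt |]. intros ->. now apply E.
Qed.

Lemma sat_copy a : sat (THTM copy_val) (0, false) a <-> sat M x a.
Proof.
  apply (sat_bisim (THTM copy_val) M copy_rel); simpl.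
  - intros jb y p Hy. exact (copy_rel_val jb y p Hy).
  - exact copy_rel_succ.
  - exact copy_rel_forth.
  - exact copy_rel_back.
  - reflexivity.
Qed.

End THTCopy.

End SigmaTModel.

Definition tht_consistent (G T : form -> Prop) : Prop :=
  exists V, tht_val V /\ sat_SigmaT (THTM V) G T (0, false).

Definition tht_entails (G T : form -> Prop) : Prop :=
  forall V, tht_val V -> sat_SigmaT (THTM V) G T (0, false) ->
  forall d, T d -> sat (THTM V) (0, false) d.

Section BoundedDepth.

Variable M : model.
Hypothesis HM : persistent_model M.
Variable n : nat.
Hypothesis Hn : depth_le M n.
Variables G T : form -> Prop.
Variable w : W M.
Hypothesis Hw : sat_SigmaT M G T w.

Lemma tht_consistent_of_sat_SigmaT : tht_consistent G T.
Proof.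
  destruct (exists_maximal M HM n w Hn) as [m [Hwm Hm]].
  assert (Hsome : exists t, le M m t /\ fulfils M T 0 t).
  { exists m. split; [exact (pm_refl M HM m) | exact (maximal_fulfils M HM G T w Hw m Hwm Hm)]. }
  assert (Hproper : forall t, le M m t -> t <> m -> fulfils M T 0 t).
  { intros t Hmt Hne. exfalso. exact (Hne (Hm t Hmt)). }
  exists (copy_val M T m). split; [exact (copy_val_tht M HM G T w Hw m Hwm) |].
  intros g Hg. apply (sat_copy M HM G T w Hw m Hwm Hsome Hproper).
  exact (sat_SigmaT_mono M HM G T w Hw m Hwm g Hg).
Qed.

Lemma fulfils_of_tht_entails : tht_entails G T -> fulfils M T 0 w.
Proof.
  intro Hent.
  enough (Habove : forall x, le M w x -> fulfils M T 0 x) by apply Habove, (pm_refl M HM).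
  apply (depth_le_ind M HM n (fun x => le M w x -> fulfils M T 0 x) Hn).
  intros x IH Hwx.
  destruct (classic (maximal M x)) as [Hx | Hx].
  { exact (maximal_fulfils M HM G T w Hw x Hwx Hx). }
  assert (Hproper : forall t, le M x t -> t <> x -> fulfils M T 0 t).
  { intros t Hxt Hne. exact (IH t Hxt Hne (pm_trans M HM _ _ _ Hwx Hxt)). }
  destruct (not_maximal M x Hx) as [t [Hxt Hne]].
  assert (Hsome : exists t, le M x t /\ fulfils M T 0 t).
  { exists t. split; [exact Hxt | exact (Hproper t Hxt Hne)]. }
  pose proof (fun a => sat_copy M HM G T w Hw x Hwx Hsome Hproper a) as Hcopy.
  intros i p Hip. apply (sat_nexti M i (Atom p) x), Hcopy.
  apply (Hent _ (copy_val_tht M HM G T w Hw x Hwx)); [| exact Hip].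
  intros g Hg. apply Hcopy. exact (sat_SigmaT_mono M HM G T w Hw x Hwx g Hg).
Qed.

End BoundedDepth.

Lemma tht_persistent V : tht_val V -> persistent_model (THTM V).
Proof.
  intro HV. unfold persistent_model, THTM, tht_le, tht_succ; simpl.
  refine (conj _ (conj _ (conj _ (conj _ (conj _ HV))))).
  - intros [a b]. split; [reflexivity | now destruct b].
  - intros [a1 b1] [a2 b2] [a3 b3] [E1 H1] [E2 H2]; simpl in *. split; [congruence |].
    destruct b1, b2, b3; simpl in *; congruence.
  - intros [a1 b1] [a2 b2] [E1 H1] [E2 H2]; simpl in *. subst.
    destruct b1, b2; simpl in *; congruence.
  - intros [a1 b1] [a2 b2] [E H]; simpl in *. split; [simpl; congruence | exact H].
  - intros [a1 b1] [a2 b2] [E H]; simpl in *. exists (a1, b2). split; [now split | now subst].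
Qed.

Lemma tht_lt_here_there x y : tht_le x y -> x <> y -> snd x = false /\ snd y = true.
Proof.
  destruct x as [a [|]], y as [b [|]]; intros [E H] Hne; simpl in *; subst;
    try discriminate; try (exfalso; now apply Hne); now split.
Qed.

Lemma tht_depth_le V n : 2 <= n -> depth_le (THTM V) n.
Proof.
  intros Hn [f Hf]. simpl in Hf.
  destruct (Hf 0 1 ltac:(lia) ltac:(lia)) as [H01 N01].
  destruct (Hf 1 2 ltac:(lia) ltac:(lia)) as [H12 N12].
  destruct (tht_lt_here_there _ _ H01 N01) as [_ T1].
  destruct (tht_lt_here_there _ _ H12 N12) as [F1 _].
  congruence.
Qed.

Lemma em_ITL_BD1 p : ITL_BD 1 (Or (Atom p) (neg (Atom p))).
Proof.
  intros M HM Hd w. simpl.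
  destruct (classic (val M w p)) as [Hp | Hp]; [now left | right].
  intros v Hwv Hv. apply Hp.
  replace w with v; [exact Hv |].
  apply NNPP. intro Hne. apply Hd.
  exists (fun i => match i with 0 => w | _ => v end).
  intros [|i] [|j] Hij Hj; try lia. split; [exact Hwv | congruence].
Qed.

Lemma em_not_THT : ~ THT (Or (Atom 0) (neg (Atom 0))).
Proof.
  assert (HV : tht_val (fun x _ => snd x = true)).
  { intros [a b] [c d] p [_ H] Hb; simpl in *; subst; now destruct d. }
  intro Hem. destruct (Hem _ HV (0, false)) as [H | H]; simpl in H; [discriminate |].
  now apply (H (0, true)).
Qed.

Lemma ITL_BD1_not_incl_THT : ~ incl (ITL_BD 1) THT.
Proof. intro H. exact (em_not_THT (H _ (em_ITL_BD1 0))). Qed.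

Lemma tht_Xmodel n X V : 2 <= n -> incl X THT -> tht_val V -> Xmodel n X (THTM V).
Proof.
  intros Hn HX HV. split.
  - intros _. now exists V.
  - intros _. split; [exact (tht_persistent V HV) |].
    split; [exact (tht_depth_le V n Hn) |].
    intros a Ha. exact (HX a Ha V HV).
Qed.

Lemma Xmodel_persistent_depth_le n X M :
  2 <= n -> Xmodel n X M -> persistent_model M /\ depth_le M n.
Proof.
  intros Hn [HTHT Hother]. destruct (classic (is_THT_logic X)) as [HX | HX].
  - destruct (HTHT HX) as [V [HV ->]].
    split; [exact (tht_persistent V HV) | exact (tht_depth_le V n Hn)].
  - now destruct (Hother HX) as (HM & Hd & _).
Qed.

Lemma safe_belief_set_iff_tht n X G T :
  2 <= n -> incl X THT -> incl T Pcirc ->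
  temporal_safe_belief_set n X G T <-> tht_consistent G T /\ tht_entails G T.
Proof.
  intros Hn HX HT. unfold temporal_safe_belief_set. split.
  - intros (_ & [M [HXM [w Hw]]] & Hent). split.
    + destruct (Xmodel_persistent_depth_le n X M Hn HXM) as [HM Hd].
      exact (tht_consistent_of_sat_SigmaT M HM n Hd G T w Hw).
    + intros V HV HSig. exact (Hent _ (tht_Xmodel n X V Hn HX HV) _ HSig).
  - intros [[V [HV HSig]] Hent]. split; [exact HT | split].
    + exists (THTM V). split; [exact (tht_Xmodel n X V Hn HX HV) |]. now exists (0, false).
    + intros M HXM w Hw. destruct (Xmodel_persistent_depth_le n X M Hn HXM) as [HM Hd].
      apply (fulfils_iff_sat M T w HT).
      exact (fulfils_of_tht_entails M HM n Hd G T w Hw Hent).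
Qed.

Theorem theorem5p6 :
  forall (n : nat), 1 <= n ->
  forall X Y : form -> Prop,
    intermediate_logic X -> intermediate_logic Y ->
    incl (ITL_BD n) X -> incl X THT ->
    incl (ITL_BD n) Y -> incl Y THT ->
    forall (G T : form -> Prop), incl T Pcirc ->
      (temporal_safe_belief_set n X G T <-> temporal_safe_belief_set n Y G T).
Proof.
  (* Being intermediate logics and containing ITL^BD_n matters only for X,
     and only to rule out n = 1. *)
  intros n Hn X Y _ _ HnX HXT _ HYT G T HT.
  assert (Hn2 : 2 <= n).
  { destruct (Nat.eq_dec n 1) as [-> | Hne]; [| lia].
    exfalso. apply ITL_BD1_not_incl_THT. intros a Ha. exact (HXT a (HnX a Ha)). }
  now rewrite (safe_belief_set_iff_tht n X G T Hn2 HXT HT),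
              (safe_belief_set_iff_tht n Y G T Hn2 HYT HT).
Qed.
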